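(* Let $G$ be a finite abstract simplicial complex with connection matrix $L$ and $g=L^{-1}$. Then for every $x\in G$, $$V(x):=\sum_{y\in G}g(x,y)=\omega(x)\,g(x,x)=k(x),$$ where $k(x)=\omega(x)\big(1-\chi(S(x))\big)$.
   Context: A finite abstract simplicial complex $G$ is a finite set of non-empty finite sets closed under taking non-empty subsets; $\omega(x)=(-1)^{|x|-1}$. The connection matrix $L$ has $L(x,y)=1$ if $x\cap y\neq\emptyset$ and $0$ otherwise. The graph $G_1$ has vertex set $G$, with $x\neq y$ adjacent iff one contains the other. $S(x)=\{y\in G: y\subsetneq x\text{ or }x\subsetneq y\}$, and $\chi(S(x))$ is the Euler characteristic of the clique complex of the subgraph of $G_1$ induced on $S(x)$. *)

From mathcomp Require Import all_boot all_order all_algebra.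
Set Implicit Arguments. Unset Strict Implicit. Unset Printing Implicit Defensive.
Import GRing.Theory Num.Theory.
Local Open Scope ring_scope.

Definition simplicial_complex (T : finType) (G : {set {set T}}) : Prop :=
  (forall x, x \in G -> x != set0) /\
  (forall x y : {set T}, x \in G -> y \subset x -> y != set0 -> y \in G).

Definition face (T : finType) (G : {set {set T}}) (i : 'I_#|G|) : {set T} :=
  enum_val i.

Definition omega (T : finType) (x : {set T}) : rat := (-1) ^+ (#|x|.-1).

Definition conn_mat (T : finType) (G : {set {set T}}) : 'M[rat]_#|G| :=
  \matrix_(i, j) (if (face i :&: face j) != set0 then 1 else 0).

Definition Sx (T : finType) (G : {set {set T}}) (x : {set T}) : {set {set T}} :=
  [set y in G | (y \proper x) || (x \proper y)].

Definition is_clique (T : finType) (A : {set {set T}}) : bool :=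
  [forall y in A, forall z in A, (y != z) ==> ((y \proper z) || (z \proper y))].

(* Euler characteristic of the clique complex of the subgraph of G_1 induced on S(x):
   sum over non-empty cliques C of (-1)^(|C|-1). *)
Definition chiS (T : finType) (G : {set {set T}}) (x : {set T}) : rat :=
  \sum_(C : {set {set T}} | [&& C \subset Sx G x, C != set0 & is_clique C])
     (-1) ^+ (#|C|.-1).

Definition kfun (T : finType) (G : {set {set T}}) (x : {set T}) : rat :=
  omega x * (1 - chiS G x).

From mathcomp Require Import all_boot all_order all_algebra.
From mathcomp Require Import zify ring lra.
Set Implicit Arguments. Unset Strict Implicit. Unset Printing Implicit Defensive.
Import GRing.Theory Num.Theory.
Local Open Scope ring_scope.

(* With sigma(x) = (-1)^|x| = -omega(x), the inverse of the connection matrix is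
   explicit: g(x,w) = -sigma(x) sigma(w) sum_{z in G, z contains x and w} sigma(z).
   Checking L g = 1 only needs the vanishing of alternating sums over Boolean
   intervals.  From the formula, both the row sum of g and omega(x) g(x,x) equal
   sigma(x) st(x), where st(x) = sum_{z in G, z contains x} sigma(z).
   On the other side, S(x) is the join of the faces below x and the faces above x,
   and 1 - chi is multiplicative under joins.  Splitting chains at their least
   element gives a Moebius-type recursion: the faces below x contribute -sigma(x)
   (they form a sphere) and the faces above x contribute sigma(x) st(x).
   So 1 - chi(S(x)) = -st(x), and k(x) = sigma(x) st(x). *)

Definition csign (T : finType) (x : {set T}) : rat := (-1) ^+ #|x|.

Lemma csign0 (T : finType) : csign (set0 : {set T}) = 1.
Proof. by rewrite /csign cards0. Qed.

Lemma csign_sq (T : finType) (x : {set T}) : csign x * csign x = 1.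
Proof. by rewrite /csign -exprD addnn -mul2n exprM sqrrN !expr1n. Qed.

Lemma csignU1 (T : finType) (a : T) (x : {set T}) :
  a \notin x -> csign (a |: x) = - csign x.
Proof. by move=> ax; rewrite /csign cardsU1 ax exprS mulN1r. Qed.

Lemma omega_csign (T : finType) (x : {set T}) : x != set0 -> omega x = - csign x.
Proof.
by rewrite -card_gt0 /omega /csign; case: #|x| => // n _; rewrite exprS mulN1r opprK.
Qed.

Definition toggle (T : finType) (a : T) (m : {set T}) : {set T} :=
  if a \in m then m :\ a else a |: m.

Lemma toggleK (T : finType) (a : T) : involutive (toggle a).
Proof.
move=> m; rewrite /toggle; have [am|am] := boolP (a \in m).
  by rewrite setD11 setD1K.
by rewrite setU11 setU1K.
Qed.

Lemma csign_toggle (T : finType) (a : T) (m : {set T}) :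
  csign (toggle a m) = - csign m.
Proof.
rewrite /toggle; case: ifP => am; last by rewrite csignU1 ?am.
by rewrite -{2}(setD1K am) csignU1 ?opprK ?setD11.
Qed.

Lemma toggle_interval (T : finType) (a : T) (lo hi m : {set T}) :
  a \notin lo -> a \in hi ->
  (lo \subset toggle a m) && (toggle a m \subset hi) = (lo \subset m) && (m \subset hi).
Proof.
move=> alo ahi; rewrite /toggle; case: ifP => am.
  by rewrite subsetD1 alo andbT subDset (setUidPr _) // sub1set.
rewrite subUset sub1set ahi; congr (_ && _).
apply/idP/idP => [sub_lo|sub_lo]; last exact: subset_trans sub_lo (subsetU1 _ _).
apply/subsetP => x xlo; move: (subsetP sub_lo x xlo); rewrite in_setU1.
by case/orP => [/eqP xa|//]; move: alo; rewrite -xa xlo.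
Qed.

Lemma sum_csign_interval (T : finType) (lo hi : {set T}) :
  \sum_(m : {set T} | (lo \subset m) && (m \subset hi)) csign m =
  if lo == hi then csign lo else 0.
Proof.
case: eqVneq => [<-|neq_lohi].
  by rewrite (big_pred1 lo) // => m; rewrite /= eqEsubset andbC.
have [sub_lohi|nsub_lohi] := boolP (lo \subset hi); last first.
  rewrite big_pred0 // => m; apply: contraNF nsub_lohi => /andP[].
  exact: subset_trans.
have /properP[_ [a ahi alo]] : lo \proper hi by rewrite properEneq neq_lohi.
(* toggling [a] is a sign-reversing involution of the interval *)
set S := (X in X = _); suff: S = - S by lra.
rewrite {2}/S (reindex_inj (inv_inj (toggleK a))) -sumrN /=.
apply: eq_big => m; first by rewrite toggle_interval.
by move=> _; rewrite csign_toggle opprK.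
Qed.

Definition rclique (X : finType) (r : rel X) (C : {set X}) : bool :=
  [forall y in C, forall z in C, (y != z) ==> r y z || r z y].

Definition rleast (X : finType) (r : rel X) (C : {set X}) (m : X) : bool :=
  (m \in C) && [forall y in C, (y != m) ==> r m y].

(* Including the empty clique, this is minus the reduced Euler characteristic
   of the clique complex of [r] restricted to [P]. *)
Definition clique_sum (X : finType) (r : rel X) (P : {set X}) : rat :=
  \sum_(C : {set X} | (C \subset P) && rclique r C) csign C.

Section Cliques.
Variable X : finType.
Implicit Types (r : rel X) (A B C D P : {set X}).

Lemma rcliqueP r C :
  reflect (forall y z, y \in C -> z \in C -> y != z -> r y z || r z y)
          (rclique r C).
Proof.
apply: (iffP forall_inP) => [cC y z yC zC yz | cC y yC].
  by move/forall_inP/(_ z zC)/implyP: (cC y yC); apply.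
by apply/forall_inP => z zC; apply/implyP; apply: cC.
Qed.

Lemma rclique0 r : rclique r set0.
Proof. by apply/rcliqueP => y z; rewrite in_set0. Qed.

Lemma rcliqueS r C D : C \subset D -> rclique r D -> rclique r C.
Proof.
move=> CD /rcliqueP cD; apply/rcliqueP => y z /(subsetP CD) yD /(subsetP CD).
exact: cD.
Qed.

Lemma clique_sum_flip r P :
  clique_sum (fun y z => r z y) P = clique_sum r P.
Proof.
apply: eq_bigl => C; congr (_ && _).
by apply/rcliqueP/rcliqueP => cC y z yC zC yz; rewrite orbC; apply: cC.
Qed.

Section Ranked.
Variables (r : rel X) (rank : X -> nat).
Hypothesis rank_lt : forall y z, r y z -> (rank y < rank z)%N.

Lemma rel_irr (y : X) : r y y = false.
Proof. by apply/negP => /rank_lt; rewrite ltnn. Qed.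

Lemma rel_asym (y z : X) : r y z -> r z y = false.
Proof.
by move=> /rank_lt yz; apply/negP => /rank_lt zy; move: (ltn_trans yz zy); rewrite ltnn.
Qed.

Lemma rclique_least C :
  rclique r C -> C != set0 -> exists m, rleast r C =1 pred1 m.
Proof.
move=> /rcliqueP cC /set0Pn[y0 y0C]; have [m mC m_min] := arg_minnP rank y0C.
have least_m : rleast r C m.
  apply/andP; split=> //; apply/forall_inP => y yC; apply/implyP => ym.
  have /orP[/rank_lt|//] := cC y m yC mC ym.
  by rewrite ltnNge m_min.
exists m => m'; apply/idP/eqP => [/andP[m'C /forall_inP m'_least]|-> //].
apply/eqP; apply: contraT => m'm.
have r_m'm : r m' m by have /implyP := m'_least m mC; apply; rewrite eq_sym.
case/andP: least_m => _ /forall_inP/(_ m' m'C)/implyP/(_ m'm).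
by rewrite (rel_asym r_m'm).
Qed.

Lemma rleast_setU1 P m C : m \in P ->
  [&& m |: C \subset P, rclique r (m |: C), rleast r (m |: C) m & m \notin C]
  = (C \subset [set y in P | r m y]) && rclique r C.
Proof.
move=> mP; apply/and4P/andP => [[mCP mC_cl /andP[_ /forall_inP m_least] mC]|[CP C_cl]].
  split; last exact: rcliqueS (subsetU1 m C) mC_cl.
  apply/subsetP => y yC; have ymC : y \in m |: C by rewrite setU1r.
  rewrite inE (subsetP mCP y ymC) /=.
  by have /implyP := m_least y ymC; apply; apply: contraNneq mC => <-.
have r_m y : y \in C -> r m y by move/(subsetP CP); rewrite inE => /andP[].
have mC : m \notin C by apply/negP => /r_m; rewrite rel_irr.
split=> //.
- rewrite subUset sub1set mP.
  by apply/subsetP => y /(subsetP CP); rewrite inE => /andP[].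
- apply/rcliqueP => y z; rewrite !in_setU1.
  move=> /predU1P[->|yC] /predU1P[->|zC]; rewrite ?eqxx // => yz.
  + by rewrite r_m.
  + by rewrite r_m ?orbT.
  + by move/rcliqueP: C_cl; apply.
- rewrite /rleast setU11; apply/forall_inP => y; rewrite in_setU1.
  case/predU1P => [->|/r_m ->].
    by rewrite eqxx.
  by rewrite implybT.
Qed.

Lemma clique_sum_least P :
  clique_sum r P = 1 - \sum_(m in P) clique_sum r [set y in P | r m y].
Proof.
rewrite /clique_sum (bigD1 set0) /=; last by rewrite sub0set rclique0.
rewrite csign0 -sumrN; congr (1 + _).
(* sort the nonempty cliques by their least element *)
rewrite (eq_bigr (fun C => \sum_(m in P | rleast r C m) csign C)); last first.
  move=> C /andP[/andP[CP cC] C0]; have [m leastE] := rclique_least cC C0.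
  have /andP[mC _] : rleast r C m by rewrite leastE /=.
  rewrite (big_pred1 m) // => m' /=; rewrite leastE andb_idl // => /eqP ->.
  exact: (subsetP CP).
rewrite (exchange_big_dep (mem P)) /=; last by move=> C m _ /andP[].
apply: eq_bigr => m mP; rewrite -sumrN.
rewrite (reindex_onto (fun C => m |: C) (fun C => C :\ m)) /=; last first.
  by move=> C /and3P[_ _ /andP[mC _]]; rewrite setD1K.
apply: eq_big => [C|C /andP[_ /eqP <-]]; last by rewrite csignU1 ?setD11.
have -> : ((m |: C) :\ m == C) = (m \notin C).
  by apply/eqP/idP => [<-|/setU1K //]; rewrite setD11.
have -> : m |: C != set0 by apply/set0Pn; exists m; rewrite setU11.
by rewrite -(rleast_setU1 _ mP) mP andbT -!andbA.
Qed.

Lemma clique_sum_setU A B : (forall a b, a \in A -> b \in B -> r a b) ->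
  clique_sum r (A :|: B) = clique_sum r A * clique_sum r B.
Proof.
have [n] := ubnP #|A|; elim: n A => // n IHn A /ltnSE leAn rAB.
have notB_A m : m \in A -> (m \in B) = false.
  by move=> mA; apply/negP => /(rAB m m mA); rewrite rel_irr.
rewrite [LHS]clique_sum_least [clique_sum r A]clique_sum_least.
rewrite (bigID (mem A)) /=.
have -> : \sum_(m in A :|: B | m \in A) clique_sum r [set y in A :|: B | r m y]
        = \sum_(m in A) clique_sum r [set y in A | r m y] * clique_sum r B.
  apply: eq_big => [m|m /andP[_ mA]].
    by rewrite andb_idl // => mA; rewrite in_setU mA.
  have -> : [set y in A :|: B | r m y] = [set y in A | r m y] :|: B.
    apply/setP => y; rewrite !inE andb_orl.
    by case yB: (y \in B); rewrite ?orbF // rAB.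
  apply: IHn => [|a b]; last by rewrite inE => /andP[aA _]; apply: rAB.
  apply: leq_trans leAn; apply: proper_card; apply/properP.
  split; first by apply/subsetP => y; rewrite inE => /andP[].
  by exists m; rewrite // inE rel_irr andbF.
have -> : \sum_(m in A :|: B | m \notin A) clique_sum r [set y in A :|: B | r m y]
        = \sum_(m in B) clique_sum r [set y in B | r m y].
  apply: eq_big => [m|m]; last first.
    rewrite in_setU => /andP[/orP[mA /negP //|mB] _].
    congr clique_sum; apply/setP => y; rewrite !inE andb_orl.
    by case yA: (y \in A); rewrite //= (rel_asym (rAB _ _ yA mB)) andbF.
  rewrite in_setU; case mA: (m \in A) => //=; first by rewrite notB_A.
  by rewrite andbT.
rewrite -big_distrl /= [clique_sum r B]clique_sum_least.
ring.
Qed.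

End Ranked.

End Cliques.

Definition proper_rel (T : finType) : rel {set T} := fun x y => x \proper y.

Lemma proper_rel_card (T : finType) (x y : {set T}) :
  proper_rel x y -> (#|x| < #|y|)%N.
Proof. exact: proper_card. Qed.

Lemma proper_rel_cocard (T : finType) (x y : {set T}) :
  proper_rel y x -> (#|T| - #|x| < #|T| - #|y|)%N.
Proof. by move=> /proper_card ltyx; have := max_card x; lia. Qed.

Lemma sum_csign_subsets (T : finType) (z : {set T}) :
  \sum_(y : {set T} | y \subset z) csign y = if z == set0 then 1 else 0.
Proof.
rewrite -(csign0 T) eq_sym -sum_csign_interval.
by apply: eq_bigl => y; rewrite sub0set.
Qed.

Definition star_sum (T : finType) (G : {set {set T}}) (x : {set T}) : rat :=
  \sum_(z in G | x \subset z) csign z.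

Lemma one_sub_chiS (T : finType) (G : {set {set T}}) (x : {set T}) :
  1 - chiS G x = clique_sum (@proper_rel T) (Sx G x).
Proof.
rewrite /chiS /clique_sum [RHS](bigD1 set0) /=; last by rewrite sub0set rclique0.
rewrite csign0 -sumrN; congr (1 + _); apply: eq_big => [C|C /and3P[_ C0 _]].
  by rewrite -andbA [X in _ = _ && X]andbC.
by rewrite /csign -card_gt0 in C0 *; case: #|C| C0 => // k _; rewrite exprS mulN1r.
Qed.

(* Knill's formula g(x,w) = omega(x) omega(w) sum_{z in G, z contains x, w} omega(z). *)
Definition green (T : finType) (G : {set {set T}}) (x w : {set T}) : rat :=
  - (csign x * csign w * \sum_(z in G | x :|: w \subset z) csign z).

Definition green_mx (T : finType) (G : {set {set T}}) : 'M[rat]_#|G| :=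
  \matrix_(i, k) green G (face i) (face k).

Lemma sum_faces (T : finType) (G : {set {set T}}) (F : {set T} -> rat) :
  \sum_(j < #|G|) F (face j) = \sum_(y in G) F y.
Proof. by rewrite (big_enum_val (A := mem G)). Qed.

Section Complex.
Variables (T : finType) (G : {set {set T}}).
Hypothesis hG : simplicial_complex G.
Implicit Types x y z w : {set T}.

Lemma face_neq0 x : x \in G -> x != set0.
Proof. by case: hG => neq0 _; apply: neq0. Qed.

Lemma subfaceE z y : z \in G -> y \subset z -> (y \in G) = (y != set0).
Proof.
move=> zG yz; apply/idP/idP; first exact: face_neq0.
by case: hG => _ sub_face y0; apply: sub_face zG yz y0.
Qed.

Lemma sum_csign_subfaces z : z \in G -> \sum_(y in G | y \subset z) csign y = -1.
Proof.
move=> zG; have := sum_csign_subsets z; rewrite (negbTE (face_neq0 zG)).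
rewrite (bigD1 set0) ?sub0set //= csign0 => /eqP; rewrite addrC addr_eq0 => /eqP <-.
by apply: eq_bigl => y; rewrite andbC; apply: andb_id2l => /(subfaceE zG).
Qed.

Lemma sum_csign_proper_subfaces x :
  x \in G -> \sum_(m in G | m \proper x) csign m = -1 - csign x.
Proof.
move=> xG; rewrite -(sum_csign_subfaces xG).
rewrite [X in _ = X - _](bigD1 x) ?xG ?subxx //= addrAC subrr add0r.
by apply: eq_bigl => m; rewrite properEneq -andbA [_ && (_ != _)]andbC.
Qed.

Lemma sum_csign_superfaces x z : x \in G -> z \in G -> x \subset z ->
  \sum_(m in G | (x \proper m) && (m \subset z)) csign m
  = (if x == z then csign x else 0) - csign x.
Proof.
move=> xG zG xz; rewrite -sum_csign_interval [X in _ = X - _](bigD1 x) ?subxx //=.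
rewrite addrAC subrr add0r.
apply: eq_bigl => m; rewrite properEneq eq_sym.
case mz: (m \subset z); rewrite ?andbF //= andbT (subfaceE zG mz).
case xm: (x \subset m); rewrite ?andbF //= andbT andb_idl // => _.
by apply: contraNneq (face_neq0 xG) => m0; move: xm; rewrite m0 subset0.
Qed.

Lemma exchange_star (P : pred {set T}) w :
  \sum_(y in G | P y) csign y * \sum_(z in G | y :|: w \subset z) csign z
  = \sum_(z in G | w \subset z) csign z * \sum_(y in G | P y && (y \subset z)) csign y.
Proof.
under eq_bigr do rewrite big_distrr /=.
rewrite (exchange_big_dep (fun z => (z \in G) && (w \subset z))) /=; last first.
  by move=> y z _ /andP[-> ]; rewrite subUset => /andP[].
apply: eq_bigr => z /andP[zG wz]; rewrite big_distrr /=.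
apply: eq_big => [y|y _]; last exact: mulrC.
by rewrite zG subUset wz andbT -andbA.
Qed.

Lemma clique_sum_lower x : x \in G ->
  clique_sum (@proper_rel T) [set y in G | y \proper x] = - csign x.
Proof.
rewrite -clique_sum_flip.
have [n] := ubnP #|x|; elim: n x => // n IHn x /ltnSE le_n xG.
rewrite (clique_sum_least (@proper_rel_cocard T)).
rewrite (eq_bigr (fun m => - csign m)) => [|m]; last first.
  rewrite inE => /andP[mG mx]; rewrite -(IHn m) //; last first.
    exact: leq_trans (proper_card mx) le_n.
  congr clique_sum; apply/setP => y; rewrite !inE /proper_rel -andbA.
  by congr (_ && _); apply: andb_idl => ym; apply: proper_trans ym mx.
by rewrite big_set /= sumrN opprK sum_csign_proper_subfaces // addrA subrr add0r.
Qed.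

Lemma clique_sum_upper x : x \in G ->
  clique_sum (@proper_rel T) [set y in G | x \proper y] = csign x * star_sum G x.
Proof.
have [n] := ubnP (#|T| - #|x|); elim: n x => // n IHn x /ltnSE le_n xG.
rewrite (clique_sum_least (@proper_rel_card T)).
rewrite big_set /=.
rewrite (eq_bigr (fun m => csign m * \sum_(z in G | m :|: x \subset z) csign z)).
  rewrite exchange_star (eq_bigr (fun z =>
    csign z * (if x == z then csign x else 0) - csign x * csign z)); last first.
    move=> z /andP[zG xz].
    by rewrite sum_csign_superfaces // mulrBr [csign x * _]mulrC.
  rewrite sumrB -big_distrr /= (bigD1 x) ?xG ?subxx //= eqxx csign_sq big1 ?addr0.
    by rewrite /star_sum; ring.
  by move=> z /andP[_ /negbTE]; rewrite eq_sym => ->; rewrite mulr0.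
move=> m /andP[mG xm]; rewrite (setUidPl (proper_sub xm)) -(IHn m) //; last first.
  by apply: leq_trans le_n; apply: proper_rel_cocard.
congr clique_sum; apply/setP => y; rewrite !inE /proper_rel andbAC.
by apply: andb_idr => /andP[_]; apply: proper_trans xm.
Qed.

Lemma one_sub_chiS_face x : x \in G -> 1 - chiS G x = - star_sum G x.
Proof.
move=> xG; rewrite one_sub_chiS.
have -> : Sx G x = [set y in G | y \proper x] :|: [set y in G | x \proper y].
  by apply/setP => y; rewrite !inE andb_orr.
rewrite (clique_sum_setU (@proper_rel_card T)) => [|a b]; last first.
  by rewrite !inE => /andP[_ ax] /andP[_ xb]; apply: proper_trans ax xb.
by rewrite clique_sum_lower // clique_sum_upper // mulrA mulNr csign_sq mulN1r.
Qed.

Lemma sum_csign_meeting x z : z \in G ->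
  \sum_(y in G | (x :&: y != set0) && (y \subset z)) csign y
  = if z \subset x then -1 else 0.
Proof.
move=> zG; rewrite (eq_bigl (fun y => (y \subset z) && (x :&: y != set0))) => [|y].
  have := sum_csign_subsets z; rewrite (negbTE (face_neq0 zG)).
  rewrite (bigID (fun y => x :&: y == set0)) /=.
  have -> : \sum_(y : {set T} | (y \subset z) && (x :&: y == set0)) csign y
          = \sum_(y : {set T} | y \subset z :\: x) csign y.
    by apply: eq_bigl => y; rewrite subsetD setI_eq0 disjoint_sym.
  rewrite sum_csign_subsets setD_eq0 addrC => /eqP; rewrite addr_eq0 => /eqP ->.
  by case: ifP; rewrite ?oppr0.
case yz: (y \subset z); rewrite ?andbF //= andbT (subfaceE zG yz).
by apply: andb_idl; apply: contraNneq => ->; rewrite setI0.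
Qed.

Lemma conn_mat_green : conn_mat G *m green_mx G = 1%:M.
Proof.
apply/matrixP => i k; rewrite !mxE.
have -> : (i == k) = (face k == face i) by rewrite eq_sym (inj_eq enum_val_inj).
have [xG wG] : face i \in G /\ face k \in G by split; apply: enum_valP.
under eq_bigr do rewrite !mxE.
rewrite (sum_faces G (fun y =>
  (if face i :&: y != set0 then 1 else 0) * green G y (face k))).
move: xG wG; set x := face i; set w := face k => xG wG.
rewrite (eq_bigr (fun y => if x :&: y != set0 then green G y w else 0)); last first.
  by move=> y _; case: ifP; rewrite ?mul1r ?mul0r.
rewrite -big_mkcondr /= (eq_bigr (fun y =>
  - csign w * (csign y * \sum_(z in G | y :|: w \subset z) csign z))); last first.
  by move=> y _; rewrite /green; ring.
rewrite -big_distrr /= exchange_star (eq_bigr (fun z =>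
  - (if z \subset x then csign z else 0))); last first.
  move=> z /andP[zG _]; rewrite sum_csign_meeting //.
  by case: ifP; rewrite ?mulrN1 ?mulr0 ?oppr0.
rewrite sumrN -big_mkcondr /= mulrNN.
rewrite (eq_bigl (fun z => (w \subset z) && (z \subset x))) => [|z].
  by rewrite sum_csign_interval; case: eqP; rewrite ?csign_sq ?mulr0.
rewrite -andbA andbCA; case zx: (z \subset x); rewrite ?andbF //= !andbT.
rewrite (subfaceE xG zx); apply: andb_idr => wz; apply: contraTneq wz => ->.
by rewrite subset0 (face_neq0 wG).
Qed.

Lemma invmx_conn_mat : invmx (conn_mat G) = green_mx G.
Proof.
have [L_unit _] := mulmx1_unit conn_mat_green.
by rewrite -(mulKmx L_unit (green_mx G)) conn_mat_green mulmx1.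
Qed.

Lemma sum_green_row x :
  x \in G -> \sum_(w in G) green G x w = csign x * star_sum G x.
Proof.
move=> xG; rewrite (eq_bigl (fun w => (w \in G) && predT w)) => [|w]; last first.
  by rewrite andbT.
rewrite (eq_bigr (fun w =>
  - csign x * (csign w * \sum_(z in G | w :|: x \subset z) csign z))); last first.
  by move=> w _; rewrite /green setUC; ring.
rewrite -big_distrr /= exchange_star (eq_bigr (fun z => - csign z)); last first.
  by move=> z /andP[zG _]; rewrite sum_csign_subfaces // mulrN1.
by rewrite sumrN mulrNN.
Qed.

Lemma green_diag x : green G x x = - star_sum G x.
Proof. by rewrite /green setUid csign_sq mul1r. Qed.

End Complex.

Theorem mainTheorem14 (T : finType) (G : {set {set T}}) :
  simplicial_complex G ->
  let g := invmx (conn_mat G) in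
  forall i : 'I_#|G|,
    (\sum_(j < #|G|) g i j = omega (face i) * g i i) /\
    (omega (face i) * g i i = kfun G (face i)).
Proof.
move=> hG g i; have xG : face i \in G := enum_valP i.
rewrite /g invmx_conn_mat // mxE green_diag omega_csign ?(face_neq0 hG) // mulrNN.
split; last by rewrite /kfun one_sub_chiS_face // omega_csign ?(face_neq0 hG) // mulrNN.
under eq_bigr do rewrite mxE.
by rewrite (sum_faces G (green G (face i))) sum_green_row.
Qed.
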